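(* Let $d$ be a compatible metric on the Cantor space $\mathbf{C}$, let $h:\mathbf{C}\to\mathbf{C}$ be an isometry of $(\mathbf{C},d)$ and let $\varepsilon>0$. Then there is a finite partition $\mathcal{V}$ of $\mathbf{C}$ into clopen sets, each of diameter less than $\varepsilon$, such that the digraph $(\mathcal{V},h)$ is a disjoint union of directed cycles.
   Context: For a finite clopen partition $\mathcal{V}$ of $\mathbf{C}$ and a map $h$, the digraph $(\mathcal{V},h)$ has vertex set $\mathcal{V}$ and a directed edge from $a$ to $b$ if and only if $h(a)\cap b\ne\emptyset$. *)

From HB Require Import structures.
From mathcomp Require Import all_boot all_order all_algebra all_fingroup.
From mathcomp Require Import all_classical all_reals topology cantor.
Set Implicit Arguments. Unset Strict Implicit. Unset Printing Implicit Defensive.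
Import Order.TTheory GRing.Theory Num.Theory.
Local Open Scope classical_set_scope.
Local Open Scope ring_scope.

Definition compatible_metric (R : realType) (d : cantor_space -> cantor_space -> R) : Prop :=
  [/\ (forall x y, 0 <= d x y),
      (forall x y, d x y = 0 <-> x = y),
      (forall x y, d x y = d y x),
      (forall x y z, d x z <= d x y + d y z) &
      (forall A : set cantor_space,
          open A <-> (forall x, A x -> exists2 e : R, 0 < e & [set y | d x y < e] `<=` A))].

Definition is_isometry (R : realType) (d : cantor_space -> cantor_space -> R)
  (h : cantor_space -> cantor_space) : Prop :=
  forall x y, d (h x) (h y) = d x y.

Definition diam_lt (R : realType) (d : cantor_space -> cantor_space -> R)
  (A : set cantor_space) (eps : R) : Prop :=
  exists2 r : R, r < eps & forall x y, A x -> A y -> d x y <= r.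

Definition clopen_partition (n : nat) (V : 'I_n -> set cantor_space) : Prop :=
  [/\ (forall i, clopen (V i)),
      (forall i, V i !=set0),
      (forall i j, i != j -> V i `&` V j = set0) &
      (forall x, exists i, V i x)].

Definition dg_edge (n : nat) (V : 'I_n -> set cantor_space)
  (h : cantor_space -> cantor_space) (a b : 'I_n) : Prop :=
  (h @` V a) `&` V b !=set0.

(* a finite digraph on 'I_n is a disjoint union of directed cycles iff its
   edge relation is the graph of a permutation *)
Definition disjoint_union_of_cycles (n : nat) (E : 'I_n -> 'I_n -> Prop) : Prop :=
  exists s : {perm 'I_n}, forall a b, E a b <-> b = s a.

From HB Require Import structures.
From mathcomp Require Import all_boot all_order all_algebra all_fingroup finmap lra.
From mathcomp Require Import all_classical all_reals topology cantor.
Set Implicit Arguments. Unset Strict Implicit. Unset Printing Implicit Defensive.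
Import Order.TTheory GRing.Theory Num.Theory.
Local Open Scope classical_set_scope.
Local Open Scope ring_scope.

(* Choose N so that points agreeing on their first N coordinates are
   eps/2-close, and call x and y equivalent when h^m x and h^m y agree on their
   first N coordinates for every m.  As every h^m is an isometry, a Lebesgue
   number del of the cover by N-cylinders makes points at distance < del
   equivalent.  Hence the classes are clopen, finitely many (each one contains
   a point determined by a finite prefix), and h maps each class into a class.
   The induced map on classes is onto because an isometry is recurrent: by
   pigeonhole on finite prefixes, some h^(m+1) y lies within del of y, hence in
   the class of y.  An onto self-map of a finite set is a permutation, and its
   graph is the digraph (V, h). *)

Section FinitelyManyClasses.
Variables (T : Type) (r : T -> T -> Prop).
Hypotheses (r_refl : forall x, r x x) (r_sym : forall x y, r x y -> r y x)
  (r_trans : forall x y z, r x y -> r y z -> r x z).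

Lemma class_eq x y : r x y -> r x = r y.
Proof.
move=> rxy; apply/seteqP; split => z /=; last exact: r_trans.
by apply: r_trans; apply: r_sym.
Qed.

Lemma finite_classes_partition (I : finType) (rep : I -> T) :
  (forall x, exists i, r x (rep i)) ->
  exists n (V : 'I_n -> set T),
    [/\ forall k, exists x, V k = r x,
        forall x, exists k, V k x &
        forall k l x, V k x -> V l x -> k = l].
Proof.
move=> rep_cover.
pose L := undup [seq r (rep i) | i <- enum I].
have L_class S : S \in L -> exists x, S = r x.
  by rewrite mem_undup => /mapP[i _ ->]; exists (rep i).
have L_mem x : r x \in L.
  have [i rxi] := rep_cover x.
  by rewrite mem_undup (class_eq rxi); apply: map_f; rewrite mem_enum.
exists (size L), (fun k => nth set0 L k); split.
- by move=> k; apply: L_class; apply: mem_nth.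
- move=> x; have ltx : (index (r x) L < size L)%N by rewrite index_mem.
  by exists (Ordinal ltx); rewrite /= nth_index.
- move=> k l x; have [a Lk] := L_class _ (mem_nth set0 (ltn_ord k)).
  have [b Ll] := L_class _ (mem_nth set0 (ltn_ord l)).
  rewrite Lk Ll => rax rbx; apply: val_inj; apply/eqP.
  rewrite -(nth_uniq set0 (ltn_ord k) (ltn_ord l) (undup_uniq _)).
  by rewrite Lk Ll (class_eq rax) (class_eq rbx).
Qed.
End FinitelyManyClasses.

Lemma fin_surj_inj (T : finType) (g : T -> T) :
  (forall y, exists x, g x = y) -> injective g.
Proof.
move=> /choice[r gK]; have [r' rK r'K] := injF_bij (can_inj gK).
have gE x : g x = r' x by rewrite -{1}(r'K x) gK.
by move=> x y; rewrite !gE; apply: (can_inj r'K).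
Qed.

Section BlockDigraph.
Variables (n : nat) (V : 'I_n -> set cantor_space) (h : cantor_space -> cantor_space).
Hypotheses (V_cover : forall x, exists i, V i x)
  (V_disj : forall i j x, V i x -> V j x -> i = j)
  (V_neq0 : forall i, V i !=set0).

Lemma dg_edge_block i j : h @` V i `<=` V j -> forall k, dg_edge V h i k <-> k = j.
Proof.
move=> hVij k; split => [[_ [[x Vix <-] Vkhx]]|->]; first exact: V_disj Vkhx (hVij _ _).
by have [x Vix] := V_neq0 i; exists (h x); split; [exists x|apply: hVij; exists x].
Qed.

Lemma block_map_cycles : (forall i, exists j, h @` V i `<=` V j) ->
  (forall j, exists x, V j (h x)) -> disjoint_union_of_cycles (dg_edge V h).
Proof.
move=> /choice[g hVg] V_range.
have g_surj j : exists i, g i = j.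
  have [x Vjhx] := V_range j; have [i Vix] := V_cover x.
  by exists i; apply: V_disj (hVg i _ _) Vjhx; exists x.
exists (perm (fin_surj_inj g_surj)) => i k; rewrite permE.
exact: dg_edge_block.
Qed.
End BlockDigraph.

Definition agree N (x y : cantor_space) := forall i, (i < N)%N -> x i = y i.

Lemma open_agree N x : open [set y | agree N y x].
Proof.
elim: N => [|N IH].
  have -> : [set y | agree 0 y x] = setT by apply/seteqP; split=> // y _ i.
  exact: openT.
have -> : [set y | agree N.+1 y x] = [set y | agree N y x] `&` proj N @^-1` [set x N].
  apply/seteqP; split => y /=.
    by move=> yx; split; [move=> i /ltnW; apply: yx|apply: yx].
  by move=> [yx yxN] i; rewrite ltnS leq_eqVlt => /predU1P[->|/yx].
apply: openI => //; apply: open_comp; last exact: discrete_open.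
by move=> y _; apply: proj_continuous.
Qed.

Lemma open_subset_agree (A : set cantor_space) x : open A -> A x ->
  exists N, [set y | agree N y x] `<=` A.
Proof.
move=> oA Ax.
pose F := filter_from [set: nat] (fun N => [set y | agree N y x]).
have F_proper : ProperFilter F.
  apply: filter_from_proper; last by move=> N _; exists x.
  apply: filter_from_filter; first by exists 0%N.
  move=> i j _ _; exists (maxn i j) => //= y yx.
  by split => k kij; apply: yx; rewrite leq_max kij ?orbT.
have : F --> x.
  apply/pointwise_cvgP => t B /= Bxt; exists t.+1 => // y /= yx.
  by rewrite (yx t (ltnSn t)); apply: nbhs_singleton.
by move=> /(_ A (open_nbhs_nbhs (conj oA Ax))) [N _ NA]; exists N.
Qed.

Definition prefix N (x : cantor_space) : {ffun 'I_N -> bool} := [ffun i : 'I_N => x i].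

Definition of_prefix N (t : {ffun 'I_N -> bool}) : cantor_space :=
  fun i => if insub i is Some j then t j else false.

Lemma agree_of_prefix N x : agree N x (of_prefix (prefix N x)).
Proof. by move=> i iN; rewrite /of_prefix insubT /= ffunE. Qed.

Lemma agree_pigeonhole N (u : nat -> cantor_space) :
  exists i k, (i < k)%N /\ agree N (u i) (u k).
Proof.
apply: contrapT => no_pair.
have prefix_inj : injective (fun m : 'I_(2 ^ N).+1 => prefix N (u m)).
  move=> m k /ffunP eq_mk; apply: val_inj.
  have agree_mk : agree N (u m) (u k).
    by move=> i iN; have := eq_mk (Ordinal iN); rewrite !ffunE.
  case: (ltngtP m k) => // [mk|km]; exfalso; apply: no_pair; first by exists m, k.
  by exists k, m; split=> // i iN; rewrite agree_mk.
by have := leq_card _ prefix_inj; rewrite card_ffun card_bool !card_ord ltnn.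
Qed.

Lemma cantor_finite_subcover (U : cantor_space -> set cantor_space) :
  (forall x, open (U x)) -> (forall x, U x x) ->
  exists D : seq cantor_space, forall y, exists2 z, z \in D & U z y.
Proof.
move=> oU Uxx; have := cantor_space_compact; rewrite compact_cover.
case/(_ _ setT U (fun x _ => oU x)) => [y _|D _ D_cover]; first by exists y.
by exists D => y; have [z] := D_cover y I; exists z.
Qed.

Lemma seq_pos_lower_bound (R : realDomainType) (T : eqType) (s : seq T) (f : T -> R) :
  (forall x, 0 < f x) -> exists2 r, 0 < r & forall x, x \in s -> r <= f x.
Proof.
move=> f_gt0; elim: s => [|a s [r r_gt0 r_le]]; first by exists 1.
exists (Num.min r (f a)); first by rewrite lt_min r_gt0 f_gt0.
by move=> x; rewrite in_cons ge_min => /predU1P[->|/r_le ->]; rewrite ?lexx ?orbT.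
Qed.

Section OrbitAgree.
Variables (h : cantor_space -> cantor_space) (N : nat).

Definition orbit_agree x y := forall m, agree N (iter m h x) (iter m h y).

Lemma orbit_agree_refl x : orbit_agree x x.
Proof. by move=> m i. Qed.

Lemma orbit_agree_sym x y : orbit_agree x y -> orbit_agree y x.
Proof. by move=> xy m i iN; rewrite xy. Qed.

Lemma orbit_agree_trans x y z : orbit_agree x y -> orbit_agree y z -> orbit_agree x z.
Proof. by move=> xy yz m i iN; rewrite xy ?yz. Qed.

Lemma orbit_agree_map x y : orbit_agree x y -> orbit_agree (h x) (h y).
Proof. by move=> xy m; have := xy m.+1; rewrite !iterSr. Qed.
End OrbitAgree.

Section CompatibleMetric.
Variables (R : realType) (d : cantor_space -> cantor_space -> R).
Hypothesis d_compat : compatible_metric d.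

Lemma dist_sym x y : d x y = d y x.
Proof. by case: d_compat. Qed.

Lemma dist_triangle x y z : d x z <= d x y + d y z.
Proof. by case: d_compat. Qed.

Lemma dist_xx x : d x x = 0.
Proof. by case: d_compat => _ d_eq0 _ _ _; apply/d_eq0. Qed.

Lemma openP_dist (A : set cantor_space) :
  open A <-> forall x, A x -> exists2 e : R, 0 < e & [set y | d x y < e] `<=` A.
Proof. by case: d_compat. Qed.

Lemma open_dist_ball x e : open [set y | d x y < e].
Proof.
apply/openP_dist => y /= xy; exists (e - d x y); first by rewrite subr_gt0.
by move=> z /= yz; apply: le_lt_trans (dist_triangle x y z) _; rewrite -ltrBrDl.
Qed.

Lemma agree_dist_lt e : 0 < e -> exists N, forall x y, agree N x y -> d x y < e.
Proof.
move=> e_gt0.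
have /choice[Nx Nx_ball] x : exists N, [set y | agree N y x] `<=` [set y | d x y < e / 2].
  by apply: open_subset_agree; [apply: open_dist_ball|rewrite /= dist_xx divr_gt0].
have [D D_cover] := cantor_finite_subcover (fun x => open_agree (Nx x) x) (fun x i _ => erefl).
exists (\max_(z <- D) Nx z) => x y xy; have [z Dz xz] := D_cover x.
have yz : agree (Nx z) y z.
  move=> i iz; rewrite -xy ?xz //; apply: leq_trans iz _.
  exact: leq_bigmax_seq.
rewrite [e]splitr; apply: le_lt_trans (dist_triangle x z y) _.
by rewrite dist_sym ltrD //; apply: Nx_ball.
Qed.

Lemma dist_lt_agree N : exists2 del : R, 0 < del & forall x y, d x y < del -> agree N x y.
Proof.
have /choice[rad rad_agree] x :
    exists e : R, 0 < e /\ [set y | d x y < e] `<=` [set y | agree N y x].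
  by have [e e_gt0 ex] := (openP_dist _).1 (open_agree N x) x (fun _ _ => erefl); exists e.
have half_rad_gt0 x : 0 < rad x / 2 by rewrite divr_gt0 //; case: (rad_agree x).
have center x : [set y | d x y < rad x / 2] x by rewrite /= dist_xx.
have [D D_cover] := cantor_finite_subcover (fun x => open_dist_ball x (rad x / 2)) center.
have [del del_gt0 del_le] := seq_pos_lower_bound D half_rad_gt0.
exists del => // x y xy; have [z Dz /= zx] := D_cover x.
have [rad_gt0 rad_sub] := rad_agree z; have del_rad := del_le z Dz.
have zx' : d z x < rad z by lra.
have zy : d z y < rad z by have := dist_triangle z x y; lra.
by move=> i iN; rewrite (rad_sub x zx' i iN) (rad_sub y zy i iN).
Qed.

Lemma is_isometry_iter h m : is_isometry d h -> is_isometry d (iter m h).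
Proof. by move=> h_iso; elim: m => [|m IHm] x y //; rewrite iterS h_iso IHm. Qed.

Lemma isometry_recurrent h e : is_isometry d h -> 0 < e ->
  forall y, exists m, d y (iter m.+1 h y) < e.
Proof.
move=> h_iso e_gt0 y; have [N N_dist] := agree_dist_lt e_gt0.
have [i [k [ik agree_ik]]] := agree_pigeonhole N (fun m => iter m h y).
exists (k - i).-1; rewrite prednK; last by rewrite subn_gt0.
rewrite -(is_isometry_iter i h_iso y) -iterD subnKC; last exact: ltnW.
exact: N_dist.
Qed.

Lemma dist_lt_orbit_agree h N : is_isometry d h ->
  exists2 del : R, 0 < del & forall x y, d x y < del -> orbit_agree h N x y.
Proof.
move=> h_iso; have [del del_gt0 del_agree] := dist_lt_agree N.
by exists del; last by move=> x y xy m; apply: del_agree; rewrite is_isometry_iter.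
Qed.

Lemma class_clopen (r : cantor_space -> cantor_space -> Prop) (del : R) :
  (forall x y, r x y -> r y x) -> (forall x y z, r x y -> r y z -> r x z) ->
  0 < del -> (forall x y, d x y < del -> r x y) -> forall a, clopen (r a).
Proof.
move=> r_sym r_trans del_gt0 del_r a; split.
  by apply/openP_dist => x ax; exists del; last by move=> y /del_r; apply: r_trans.
rewrite -openC; apply/openP_dist => x nax.
by exists del; last by move=> y /del_r xy ay; apply: nax; apply: r_trans ay (r_sym _ _ xy).
Qed.

Lemma orbit_agree_clopen_partition h N : is_isometry d h ->
  exists n (V : 'I_n -> set cantor_space),
    clopen_partition V /\ forall k x, V k x -> V k = orbit_agree h N x.
Proof.
move=> h_iso; have [del del_gt0 del_r] := dist_lt_orbit_agree N h_iso.
have [M M_dist] := agree_dist_lt del_gt0.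
have rep_cover x : exists t : {ffun 'I_M -> bool}, orbit_agree h N x (of_prefix t).
  by exists (prefix M x); apply/del_r/M_dist/agree_of_prefix.
have r_sym := @orbit_agree_sym h N; have r_trans := @orbit_agree_trans h N.
have [n [V [V_class V_cover V_disj]]] :=
  finite_classes_partition (@orbit_agree_refl h N) r_sym r_trans rep_cover.
exists n, V; split; last first.
  by move=> k x; have [a ->] := V_class k; apply: class_eq.
split => // [k|k|k l kl].
- by have [a ->] := V_class k; apply: class_clopen r_sym r_trans del_gt0 del_r a.
- by have [a ->] := V_class k; exists a; apply: orbit_agree_refl.
- by apply/disjoints_subset => x Vkx Vlx; move/eqP: kl; apply; apply: V_disj Vkx Vlx.
Qed.
End CompatibleMetric.

Lemma clopen_partition_disj n (V : 'I_n -> set cantor_space) :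
  clopen_partition V -> forall i j x, V i x -> V j x -> i = j.
Proof.
case=> _ _ V_disj _ i j x Vix Vjx; apply/eqP; apply: contraT => /V_disj Vij0.
by suff : set0 x by []; rewrite -Vij0.
Qed.

Theorem proposition6p3 (R : realType) (d : cantor_space -> cantor_space -> R)
  (h : cantor_space -> cantor_space) (eps : R) :
  compatible_metric d -> is_isometry d h -> 0 < eps ->
  exists (n : nat) (V : 'I_n -> set cantor_space),
    [/\ clopen_partition V,
        (forall i, diam_lt d (V i) eps) &
        disjoint_union_of_cycles (dg_edge V h)].
Proof.
move=> d_compat h_iso eps_gt0.
have [N N_dist] : exists N, forall x y, agree N x y -> d x y < eps / 2.
  by apply: (agree_dist_lt d_compat); lra.
have [del del_gt0 del_r] := dist_lt_orbit_agree d_compat N h_iso.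
have [n [V [V_part V_class]]] := orbit_agree_clopen_partition d_compat N h_iso.
have [_ V_neq0 _ V_cover] := V_part.
exists n, V; split => // [k|].
  exists (eps / 2) => [|x y Vkx]; first lra.
  by rewrite (V_class k x Vkx) => xy; apply/ltW/N_dist; apply: (xy 0%N).
apply: (block_map_cycles V_cover (clopen_partition_disj V_part) V_neq0) => k.
  have [a Vka] := V_neq0 k; have [l Vlha] := V_cover (h a).
  exists l => _ [x Vkx <-]; rewrite (V_class l _ Vlha).
  by apply: orbit_agree_map; rewrite -(V_class k _ Vka).
have [y Vky] := V_neq0 k; have [m hmy] := isometry_recurrent d_compat h_iso del_gt0 y.
by exists (iter m h y); rewrite -iterS (V_class k _ Vky); apply: del_r.
Qed.
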